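(* A coarse space $(X,\mathcal E)$ has $\operatorname{asdim}(X)\le n$ for some $n\in\omega$ if and only if for every $\varepsilon\in\mathcal E$ there exist $\delta\in\mathcal E$ and a coloring $\chi:X\to\{0,\dots,n\}$ such that every $\chi$-monochrome $\varepsilon$-chain $C\subset X$ satisfies $C\times C\subset\delta$.
   Context: A coarse space is a pair $(X,\mathcal E)$ of a set and a family of entourages $\varepsilon\subset X\times X$ that contain the diagonal, are symmetric, are (up to containment) closed under composition, and such that any symmetric $\delta$ with $\Delta_X\subset\delta\subset\varepsilon\in\mathcal E$ is in $\mathcal E$. $B(x,\varepsilon)=\{y:(x,y)\in\varepsilon\}$; $\operatorname{mesh}(\mathcal U)=\bigcup_{U\in\mathcal U}U\times U$. $\operatorname{asdim}(X)$ is the least $n\in\omega$ such that for every $\varepsilon\in\mathcal E$ there is a cover $\mathcal U$ of $X$ with $\operatorname{mesh}(\mathcal U)\subset\delta$ for some $\delta\in\mathcal E$ and each $B(x,\varepsilon)$ meeting at most $n+1$ members of $\mathcal U$ ($\infty$ if none). An $\varepsilon$-chain is a finite set $\{x_0,\dots,x_m\}$ with $(x_i,x_{i+1})\in\varepsilon$ for all $i<m$; it is $\chi$-monochrome if $\chi$ is constant on it. *)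

From Stdlib Require Import List Arith.
Import ListNotations.

Definition entourage (X : Type) := X -> X -> Prop.

Definition ball {X : Type} (x : X) (eps : entourage X) : X -> Prop := fun y => eps x y.

Definition ecomp {X : Type} (e1 e2 : entourage X) : entourage X :=
  fun x z => exists y, e1 x y /\ e2 y z.

Definition esubset {X : Type} (e1 e2 : entourage X) : Prop := forall x y, e1 x y -> e2 x y.

Definition coarse_structure (X : Type) (E : entourage X -> Prop) : Prop :=
  (forall eps, E eps -> forall x, eps x x) /\
  (forall eps, E eps -> forall x y, eps x y -> eps y x) /\
  (forall e1 e2, E e1 -> E e2 -> exists e3, E e3 /\ esubset (ecomp e1 e2) e3) /\
  (forall eps delta, E eps ->
     (forall x, delta x x) -> (forall x y, delta x y -> delta y x) ->
     esubset delta eps -> E delta).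

Definition mesh {X : Type} (U : (X -> Prop) -> Prop) : entourage X :=
  fun x y => exists A, U A /\ A x /\ A y.

Definition is_cover {X : Type} (U : (X -> Prop) -> Prop) : Prop :=
  forall x, exists A, U A /\ A x.

Definition meets_at_most {X : Type} (U : (X -> Prop) -> Prop) (S : X -> Prop) (k : nat) : Prop :=
  exists l : list (X -> Prop), length l <= k /\
    forall A, U A -> (exists y, S y /\ A y) -> In A l.

Definition asdim_prop {X : Type} (E : entourage X -> Prop) (n : nat) : Prop :=
  forall eps, E eps -> exists U : (X -> Prop) -> Prop,
    is_cover U /\ (exists delta, E delta /\ esubset (mesh U) delta) /\
    forall x, meets_at_most U (ball x eps) (S n).

Definition asdim_le {X : Type} (E : entourage X -> Prop) (n : nat) : Prop :=
  exists m, m <= n /\ asdim_prop E m.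

Inductive chain_list {X : Type} (eps : entourage X) : list X -> Prop :=
| chain_nil : chain_list eps []
| chain_one : forall x, chain_list eps [x]
| chain_cons : forall x y l, eps x y -> chain_list eps (y :: l) -> chain_list eps (x :: y :: l).

Definition is_chain {X : Type} (eps : entourage X) (C : X -> Prop) : Prop :=
  exists l : list X, l <> [] /\ (forall x, C x <-> In x l) /\ chain_list eps l.

Definition monochrome {X : Type} (chi : X -> nat) (C : X -> Prop) : Prop :=
  forall x y, C x -> C y -> chi x = chi y.

(* Forward direction: let asdim X = m <= n and let a_0 = eps, a_(j+1) ⊇ a_j ∘ eps be
   entourages.  Take a cover U of X with mesh in E whose a_(m+1)-balls meet at most m+1
   members, and let S_j(x) be the set of members meeting the a_j-ball of x.  The chain
   S_0(x) ⊆ ... ⊆ S_(m+1)(x) has nonempty sets of size at most m+1, so it stalls at some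
   level j(x) <= m; colour x by |S_(j(x))(x)| - 1.  If x, y are eps-close and equally
   coloured then S_(j(x))(x) ⊆ S_(j(x)+1)(y) ⊆ S_(j(y))(y) when j(x) <= j(y), and equal
   cardinalities force equality; hence S_(j(x))(x) is constant along a monochrome
   eps-chain, and any two points of the chain are joined by a_m ∘ mesh U ∘ a_m.

   Backward direction: colour for eps ∘ eps and cover X by the classes of the
   equivalence generated by "same colour and (eps ∘ eps)-close".  Two points of a class
   lie on a monochrome chain, and an eps-ball meets at most one class per colour. *)

From Stdlib Require Import List Arith Lia Classical ClassicalEpsilon
  FunctionalExtensionality PropExtensionality Relations.
Import ListNotations.

Definition monochrome_chains_bounded {X : Type} (E : entourage X -> Prop) (n : nat) :=
  forall eps, E eps ->
    exists delta, E delta /\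
      exists chi : X -> nat, (forall x, chi x <= n) /\
        forall C : X -> Prop, is_chain eps C -> monochrome chi C ->
          forall x y, C x -> C y -> delta x y.

Definition has_card {T : Type} (P : T -> Prop) (k : nat) : Prop :=
  exists l, NoDup l /\ length l = k /\ forall t, P t <-> In t l.

Lemma has_card_of_incl_list {T : Type} (l0 : list T) (P : T -> Prop) :
  (forall t, P t -> In t l0) -> exists k, has_card P k /\ k <= length l0.
Proof.
  revert P; induction l0 as [|a l0 IH]; intros P HP.
  - exists 0; split; [|simpl; lia].
    exists []; repeat split; [constructor | intro Ht; exact (HP t Ht) | intros []].
  - destruct (classic (P a)) as [Pa | nPa].
    + destruct (IH (fun t => P t /\ t <> a)) as [k [[l [Hnd [Hlen Hl]]] Hk]].
      { intros t [Pt Hta]; destruct (HP t Pt) as [<- | Ht]; [congruence | exact Ht]. }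
      exists (S k); split; [|simpl; lia].
      exists (a :: l); repeat split.
      * constructor; [intro Hal; apply Hl in Hal; tauto | exact Hnd].
      * simpl; lia.
      * intro Pt; destruct (classic (t = a)) as [-> | Hta]; [now left | right; apply Hl; auto].
      * intros [<- | Htl]; [exact Pa | apply Hl in Htl; tauto].
    + destruct (IH P) as [k [Hk Hkl]].
      { intros t Pt; destruct (HP t Pt) as [<- | Ht]; [contradiction | exact Ht]. }
      exists k; split; [exact Hk | simpl; lia].
Qed.

Lemma has_card_le {T : Type} (P Q : T -> Prop) k k' :
  has_card P k -> has_card Q k' -> (forall t, P t -> Q t) -> k <= k'.
Proof.
  intros [l [Hnd [<- Hl]]] [l' [_ [<- Hl']]] PQ.
  apply NoDup_incl_length; [exact Hnd |].
  intros t Ht; apply Hl', PQ, Hl, Ht.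
Qed.

Lemma has_card_incl_eq {T : Type} (P Q : T -> Prop) k k' :
  has_card P k -> has_card Q k' -> (forall t, P t -> Q t) -> k' <= k ->
  forall t, Q t -> P t.
Proof.
  intros [l [Hnd [<- Hl]]] [l' [_ [<- Hl']]] PQ Hle t Qt.
  apply Hl, (NoDup_length_incl Hnd Hle); [| apply Hl', Qt].
  intros u Hu; apply Hl', PQ, Hl, Hu.
Qed.

Lemma has_card_pos {T : Type} (P : T -> Prop) k t : has_card P k -> P t -> 1 <= k.
Proof.
  intros [[|u l] [_ [<- Hl]]] Pt; [apply Hl in Pt; destruct Pt | simpl; lia].
Qed.

Lemma nondecreasing_bounded_stalls (c : nat -> nat) (m : nat) :
  (forall j, j <= m -> c j <= c (S j)) -> 1 <= c 0 -> c (S m) <= S m ->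
  exists j, j <= m /\ c j = c (S j).
Proof.
  intros Hmono Hc0 Hcm.
  assert (Hgrow : forall k, k <= S m ->
            (exists j, j < k /\ c j = c (S j)) \/ c 0 + k <= c k).
  { induction k as [|k IH]; intro Hk; [right; lia |].
    destruct (IH ltac:(lia)) as [[j [Hj Hcj]] | Hck].
    - left; exists j; split; [lia | exact Hcj].
    - destruct (Nat.eq_dec (c k) (c (S k))) as [Heq | Hne].
      + left; exists k; split; [lia | exact Heq].
      + right; specialize (Hmono k ltac:(lia)); lia. }
  destruct (Hgrow (S m) (le_n _)) as [[j [Hj Hcj]] | Hcm'];
    [exists j; split; [lia | exact Hcj] | lia].
Qed.

Lemma chain_list_constant {X T : Type} (e : entourage X) (f : X -> T) (l : list X) :
  chain_list e l ->
  (forall x y, In x l -> In y l -> e x y -> f x = f y) ->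
  forall x y, In x l -> In y l -> f x = f y.
Proof.
  induction 1 as [| x | x y l Hxy Hl IH]; intros Hf u v Hu Hv.
  - destruct Hu.
  - destruct Hu as [<- | []]; destruct Hv as [<- | []]; reflexivity.
  - assert (Htail : forall z, In z (x :: y :: l) -> f z = f y).
    { intros z [<- | Hz]; [apply Hf; simpl; auto |].
      apply IH; [intros; apply Hf; simpl; auto | exact Hz | now left]. }
    rewrite (Htail u Hu), (Htail v Hv); reflexivity.
Qed.

Section ColouringFromCover.

Variables (X : Type) (eps : entourage X) (a : nat -> entourage X).
Variables (U : (X -> Prop) -> Prop) (m : nat).

Hypothesis eps_refl : forall x, eps x x.
Hypothesis eps_sym : forall x y, eps x y -> eps y x.
Hypothesis a_refl : forall j x, a j x x.
Hypothesis a_sym : forall j x y, a j x y -> a j y x.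
Hypothesis a_step : forall j x y z, a j x y -> eps y z -> a (S j) x z.
Hypothesis U_cover : is_cover U.
Hypothesis U_mult : forall x, meets_at_most U (ball x (a (S m))) (S m).

Lemma a_mono j j' x y : j <= j' -> a j x y -> a j' x y.
Proof. induction 1; auto; intro Hxy; apply (a_step _ _ y); auto. Qed.

Definition reach (j : nat) (x : X) (A : X -> Prop) : Prop :=
  U A /\ exists y, a j x y /\ A y.

Lemma reach_mono j j' x A : j <= j' -> reach j x A -> reach j' x A.
Proof.
  intros Hj [UA [y [Hxy Ay]]]; split; [exact UA |].
  exists y; split; [apply (a_mono j) |]; auto.
Qed.

Lemma reach_step j x y A : eps x y -> reach j x A -> reach (S j) y A.
Proof.
  intros Hxy [UA [z [Hxz Az]]]; split; [exact UA |].
  exists z; split; [apply a_sym, (a_step _ _ x); auto | exact Az].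
Qed.

Lemma reach_cover x : exists A, reach 0 x A /\ A x.
Proof.
  destruct (U_cover x) as [A [UA Ax]].
  exists A; repeat split; auto; exists x; auto.
Qed.

Definition count (j : nat) (x : X) : nat :=
  epsilon (inhabits 0) (has_card (reach j x)).

Lemma count_spec j x : j <= S m -> has_card (reach j x) (count j x) /\ count j x <= S m.
Proof.
  intro Hj.
  destruct (U_mult x) as [l [Hl Hlist]].
  destruct (has_card_of_incl_list l (reach j x)) as [k [Hk Hkl]].
  { intros A [UA [y [Hxy Ay]]]; apply Hlist; [exact UA |].
    exists y; split; [apply (a_mono j) |]; auto. }
  assert (Hc : has_card (reach j x) (count j x)) by (unfold count; apply epsilon_spec; eauto).
  split; [exact Hc |].
  pose proof (has_card_le _ _ _ _ Hc Hk (fun _ h => h)); lia.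
Qed.

Lemma count_pos j x : j <= S m -> 1 <= count j x.
Proof.
  intro Hj; destruct (reach_cover x) as [A [HA _]].
  apply (has_card_pos _ _ A (proj1 (count_spec j x Hj))).
  apply (reach_mono 0); [lia | exact HA].
Qed.

Lemma count_stalls x : exists j, j <= m /\ count j x = count (S j) x.
Proof.
  apply nondecreasing_bounded_stalls.
  - intros j Hj; apply (has_card_le (reach j x) (reach (S j) x));
      try apply count_spec; try lia.
    intro A; apply reach_mono; lia.
  - apply count_pos; lia.
  - apply count_spec; lia.
Qed.

Definition level (x : X) : nat :=
  epsilon (inhabits 0) (fun j => j <= m /\ count j x = count (S j) x).

Lemma level_spec x : level x <= m /\ count (level x) x = count (S (level x)) x.
Proof. unfold level; apply epsilon_spec, count_stalls. Qed.

Lemma reach_level_stable x A : reach (S (level x)) x A -> reach (level x) x A.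
Proof.
  destruct (level_spec x) as [Hl Hc].
  apply (has_card_incl_eq _ _ (count (level x) x) (count (S (level x)) x));
    try apply count_spec; try lia.
  intro; apply reach_mono; lia.
Qed.

(* The colours 0..m stand for the stalled cardinalities 1..m+1. *)
Definition colour (x : X) : nat := count (level x) x - 1.

Lemma colour_le x : colour x <= m.
Proof.
  destruct (level_spec x) as [Hl _].
  pose proof (proj2 (count_spec (level x) x ltac:(lia))); unfold colour; lia.
Qed.

Definition label (x : X) : (X -> Prop) -> Prop := reach (level x) x.

Lemma label_incl x y A : eps x y -> level x <= level y -> label x A -> label y A.
Proof.
  intros Hxy Hle HA; apply (reach_step _ _ y) in HA; [| exact Hxy].
  destruct (Nat.eq_dec (level x) (level y)) as [Heq | Hne].
  - apply reach_level_stable; rewrite <- Heq; exact HA.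
  - apply (reach_mono (S (level x))); [lia | exact HA].
Qed.

Lemma label_eq_of_step x y : eps x y -> colour x = colour y -> label x = label y.
Proof.
  assert (Hwlog : forall x y, eps x y -> colour x = colour y -> level x <= level y ->
                    label x = label y).
  { intros u v Huv Hc Hle.
    pose proof (level_spec u) as [Hu _]; pose proof (level_spec v) as [Hv _].
    pose proof (count_pos (level u) u ltac:(lia)).
    pose proof (count_pos (level v) v ltac:(lia)).
    unfold colour in Hc.
    apply functional_extensionality; intro A; apply propositional_extensionality.
    split; [apply label_incl; auto |].
    apply (has_card_incl_eq _ _ (count (level u) u) (count (level v) v));
      try apply count_spec; try lia.
    intro; apply label_incl; auto. }
  intros Hxy Hc; destruct (Nat.le_gt_cases (level x) (level y)).
  - apply Hwlog; auto.
  - symmetry; apply Hwlog; auto; lia.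
Qed.

Lemma monochrome_chain_close (C : X -> Prop) x y :
  is_chain eps C -> monochrome colour C -> C x -> C y ->
  ecomp (ecomp (a m) (mesh U)) (a m) x y.
Proof.
  intros [l [_ [HC Hl]]] Hmono Cx Cy.
  assert (Hlab : label x = label y).
  { apply (chain_list_constant eps label l Hl); try apply HC; auto.
    intros u v Hu Hv Huv; apply label_eq_of_step; [exact Huv |].
    apply Hmono; apply HC; assumption. }
  destruct (reach_cover x) as [A [HA0 _]].
  assert (HAx : label x A) by (apply (reach_mono 0); [lia | exact HA0]).
  assert (HAy : label y A) by (rewrite <- Hlab; exact HAx).
  destruct HAx as [UA [u [Hxu Au]]], HAy as [_ [v [Hyv Av]]].
  exists v; split.
  - exists u; split; [apply (a_mono (level x)); [apply level_spec | exact Hxu] |].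
    exists A; auto.
  - apply a_sym, (a_mono (level y)); [apply level_spec | exact Hyv].
Qed.

End ColouringFromCover.

Section ColourClasses.

Variables (X : Type) (e : entourage X) (chi : X -> nat).

Hypothesis e_sym : forall x y, e x y -> e y x.

Definition same_colour_step (u v : X) : Prop := chi u = chi v /\ e u v.

Definition colour_class (c : X) : X -> Prop := clos_refl_trans X same_colour_step c.

Lemma colour_class_sym c z : colour_class c z -> colour_class z c.
Proof.
  induction 1 as [u v [Hc Huv] | | ]; [apply rt_step; split; auto | apply rt_refl |].
  eapply rt_trans; eauto.
Qed.

Lemma colour_class_eq c z : colour_class c z -> colour_class c = colour_class z.
Proof.
  intro Hcz; apply functional_extensionality; intro w; apply propositional_extensionality.
  split; intro Hw; eapply rt_trans; eauto; apply colour_class_sym; exact Hcz.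
Qed.

Lemma colour_class_chain y z : colour_class y z ->
  exists l, chain_list e (y :: l) /\ In z (y :: l) /\
            forall w, In w (y :: l) -> chi w = chi y.
Proof.
  intro Hyz; apply clos_rt_rt1n in Hyz.
  induction Hyz as [y | y w z [Hc Hyw] _ [l [Hl [Hz Hcol]]]].
  - exists []; repeat split; [constructor | now left |].
    intros w [<- | []]; reflexivity.
  - exists (w :: l); repeat split; [constructor; auto | right; exact Hz |].
    intros u [<- | Hu]; [reflexivity | rewrite (Hcol u Hu); auto].
Qed.

Definition colour_classes (A : X -> Prop) : Prop := exists c, A = colour_class c.

Lemma colour_classes_cover : is_cover colour_classes.
Proof. intro x; exists (colour_class x); split; [now exists x | apply rt_refl]. Qed.

Lemma colour_classes_mesh (delta : entourage X) :
  (forall C, is_chain e C -> monochrome chi C -> forall x y, C x -> C y -> delta x y) ->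
  esubset (mesh colour_classes) delta.
Proof.
  intros Hchains y z [A [[c ->] [Hy Hz]]].
  destruct (colour_class_chain y z) as [l [Hl [Hzl Hcol]]].
  { eapply rt_trans; [apply colour_class_sym; exact Hy | exact Hz]. }
  apply (Hchains (fun w => In w (y :: l))); [| | now left | exact Hzl].
  - exists (y :: l); repeat split; auto; congruence.
  - intros u v Hu Hv; rewrite (Hcol u Hu), (Hcol v Hv); reflexivity.
Qed.

(* An [eps]-ball meets only the classes of its own points, and two of its points of
   the same colour are [e]-close, hence in one class: so one class per colour. *)
Lemma colour_classes_meet_at_most (eps : entourage X) (n : nat) :
  (forall x, chi x <= n) -> (forall x y z, eps x y -> eps x z -> e y z) ->
  forall x, meets_at_most colour_classes (ball x eps) (S n).
Proof.
  intros Hchi Heps x.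
  pose (pick i := match excluded_middle_informative (exists y, eps x y /\ chi y = i) with
                  | left h => colour_class (proj1_sig (constructive_indefinite_description _ h))
                  | right _ => fun _ : X => False
                  end).
  exists (map pick (seq 0 (S n))); split; [rewrite length_map, length_seq; lia |].
  intros A [c ->] [y [Hxy Hcy]].
  replace (colour_class c) with (pick (chi y)).
  { apply in_map, in_seq; specialize (Hchi y); lia. }
  unfold pick; destruct (excluded_middle_informative _) as [h | h]; [| exfalso; eauto].
  destruct (constructive_indefinite_description _ h) as [y' [Hxy' Hc]]; simpl.
  rewrite (colour_class_eq c y Hcy).
  symmetry; apply colour_class_eq, rt_step; split; [auto | apply (Heps x); auto].
Qed.

End ColourClasses.

Lemma thickening_sequence (X : Type) (E : entourage X -> Prop) (eps : entourage X) :
  coarse_structure X E -> E eps ->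
  exists a : nat -> entourage X, (forall j, E (a j)) /\
    forall j x y z, a j x y -> eps y z -> a (S j) x z.
Proof.
  intros [_ [_ [Hcomp _]]] Heps.
  pose (next e := epsilon (inhabits eps) (fun e' => E e' /\ esubset (ecomp e eps) e')).
  assert (Hnext : forall e, E e -> E (next e) /\ esubset (ecomp e eps) (next e))
    by (intros e He; apply epsilon_spec, Hcomp; auto).
  assert (Ha : forall j, E (Nat.iter j next eps))
    by (induction j; [exact Heps | apply Hnext; auto]).
  exists (fun j => Nat.iter j next eps); split; [exact Ha |].
  intros j x y z Hxy Hyz; apply (Hnext _ (Ha j)); exists y; auto.
Qed.

Lemma asdim_le_monochrome_chains (X : Type) (E : entourage X -> Prop) (n : nat) :
  coarse_structure X E -> asdim_le E n -> monochrome_chains_bounded E n.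
Proof.
  intros HE [m [Hmn Hdim]] eps Heps.
  pose proof HE as [Hrefl [Hsym [Hcomp _]]].
  destruct (thickening_sequence X E eps HE Heps) as [a [Ha Hstep]].
  destruct (Hdim (a (S m)) (Ha _)) as [U [Hcov [[d [Hd Hmesh]] Hmult]]].
  destruct (Hcomp (a m) d (Ha m) Hd) as [e1 [He1 H1]].
  destruct (Hcomp e1 (a m) He1 (Ha m)) as [e2 [He2 H2]].
  assert (Ha_refl : forall j x, a j x x) by (intro j; apply Hrefl, Ha).
  assert (Ha_sym : forall j x y, a j x y -> a j y x) by (intro j; apply Hsym, Ha).
  exists e2; split; [exact He2 |].
  exists (colour X a U m); split.
  - intro x; pose proof (colour_le X eps a U m (Hrefl _ Heps) Ha_refl Ha_sym Hstep
                           Hcov Hmult x); lia.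
  - intros C HC Hmono x y Cx Cy.
    destruct (monochrome_chain_close X eps a U m (Hrefl _ Heps) (Hsym _ Heps)
                Ha_refl Ha_sym Hstep Hcov Hmult C x y HC Hmono Cx Cy)
      as [v [[u [Hxu Huv]] Hvy]].
    apply H2; exists v; split; [apply H1; exists u; split; auto; apply Hmesh |]; auto.
Qed.

Lemma monochrome_chains_asdim_le (X : Type) (E : entourage X -> Prop) (n : nat) :
  coarse_structure X E -> monochrome_chains_bounded E n -> asdim_le E n.
Proof.
  intros [_ [Hsym [Hcomp _]]] Hchains; exists n; split; [lia |].
  intros eps Heps.
  destruct (Hcomp eps eps Heps Heps) as [e [He Hee]].
  destruct (Hchains e He) as [delta [Hdelta [chi [Hchi Hmono]]]].
  exists (colour_classes X e chi); split; [| split].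
  - apply colour_classes_cover.
  - exists delta; split; [exact Hdelta |].
    apply colour_classes_mesh; [apply (Hsym _ He) | exact Hmono].
  - apply colour_classes_meet_at_most; [apply (Hsym _ He) | exact Hchi |].
    intros x y z Hxy Hxz; apply Hee; exists x; split; [apply (Hsym _ Heps) |]; auto.
Qed.

Theorem corollary2p4 (X : Type) (E : entourage X -> Prop) (n : nat) :
  coarse_structure X E ->
  (asdim_le E n <->
   forall eps, E eps ->
     exists delta, E delta /\
       exists chi : X -> nat, (forall x, chi x <= n) /\
         forall C : X -> Prop, is_chain eps C -> monochrome chi C ->
           forall x y, C x -> C y -> delta x y).
Proof.
  intro HE; split.
  - apply asdim_le_monochrome_chains, HE.
  - apply monochrome_chains_asdim_le, HE.
Qed.
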